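(* Fix a single machine with nonnegative real parameters $k^A,k^B,t^A,t^B$ and a real bound $L$. For integers $a,b\ge 0$ let $f(a,b)$ be the minimum processing time for this machine to process $a$ A-jobs and $b$ B-jobs (as defined in the context). Then for every fixed integer $a\ge 0$, the set $\{b\in\mathbb{Z}_{\ge 0} : f(a,b)\le L\}$ consists of consecutive integers, i.e. if $b_1<b_2<b_3$ are nonnegative integers with $f(a,b_1)\le L$ and $f(a,b_3)\le L$, then $f(a,b_2)\le L$.
   Context: A machine processes jobs of two types, A and B, in batches. A schedule for the task-combination $(a,b)$ ($a$ A-jobs and $b$ B-jobs) is a finite sequence of batches, each batch being a nonempty group of jobs of a single type, such that any two consecutive batches in the sequence are of different types, and in total exactly $a$ A-jobs and $b$ B-jobs are processed. An A-batch of $x$ jobs takes $t^A+k^A x^2$ time units and a B-batch of $x$ jobs takes $t^B+k^B x^2$ time units; the time of a schedule is the sum of the times of its batches (the empty schedule, used for $(0,0)$, takes time $0$). $f(a,b)$ is the minimum time over all schedules for $(a,b)$. *)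

From HB Require Import structures.
From mathcomp Require Import all_boot all_order all_algebra.
From mathcomp Require Import boolp classical_sets reals.
Set Implicit Arguments. Unset Strict Implicit. Unset Printing Implicit Defensive.
Import Order.TTheory GRing.Theory Num.Theory.
Local Open Scope ring_scope.
Local Open Scope classical_set_scope.

(* A batch is (is_A, size): is_A = true for an A-batch, false for a B-batch. *)
Definition batch := (bool * nat)%type.

Definition valid_schedule (a b : nat) (s : seq batch) : bool :=
  [&& all (fun p : batch => 0 < p.2)%N s,
      sorted (fun p q : batch => p.1 != q.1) s,
      sumn [seq p.2 | p <- s & p.1] == a
    & sumn [seq p.2 | p <- s & ~~ p.1] == b].

Section Times.
Variable R : realType.
Variables (kA kB tA tB : R).

Definition batch_time (p : batch) : R :=
  if p.1 then tA + kA * (p.2%:R) ^+ 2 else tB + kB * (p.2%:R) ^+ 2.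

Definition sched_time (s : seq batch) : R := \sum_(p <- s) batch_time p.

(* f(a,b): minimum time over all schedules for (a,b) (the set of schedule
   times is finite and nonempty, so the infimum is attained). *)
Definition f (a b : nat) : R :=
  inf [set sched_time s | s in [set s | valid_schedule a b s]].
End Times.

(* A schedule is determined by the sizes of its A-batches and of its B-batches:
   two lists of positive integers whose lengths p and n differ by at most one,
   and its time is p tA + kA (sum of the squared A-sizes) + n tB + kB (sum of
   the squared B-sizes).  Given schedules for (a, b1) and (a, b3), we build one
   for (a, b2) that is no slower than one of them.  If the schedule for b3 has
   at most b2 + 1 A-batches, keep them and spread the b2 B-jobs as evenly as
   possible over min(n, b2) batches.  Otherwise take b2 + 1 balanced A-batches
   and b2 single-job B-batches.  By the tangent bound x^2 >= (2j+1)x - j(j+1),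
   valid for integers x and j, every schedule with p A-batches takes at least
   an affine function of p, and this schedule attains it at p = b2 + 1; since
   the schedule for b1 has at most b2 A-batches and the one for b3 at least
   b2 + 2, one of them is at least as slow. *)

From HB Require Import structures.
From mathcomp Require Import all_boot all_order all_algebra.
From mathcomp Require Import classical_sets reals.
From mathcomp Require Import zify ring lra.
Import Order.TTheory GRing.Theory Num.Theory.

Set Implicit Arguments. Unset Strict Implicit. Unset Printing Implicit Defensive.

Definition sizesA (s : seq batch) : seq nat := [seq p.2 | p <- s & p.1].
Definition sizesB (s : seq batch) : seq nat := [seq p.2 | p <- s & ~~ p.1].

Definition alternate (p q : batch) : bool := p.1 != q.1.

Lemma all_pos_sizes s : all (fun p : batch => 0 < p.2) s =
  all (leq 1) (sizesA s) && all (leq 1) (sizesB s).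
Proof.
rewrite !all_map !all_filter -all_predI.
by apply: eq_all => -[[] x] /=; rewrite ?andbT.
Qed.

Lemma size_le_sumn (l : seq nat) : all (leq 1) l -> size l <= sumn l.
Proof. by elim: l => //= x l IH /andP[x_gt0 /IH]; lia. Qed.

Lemma alternate_sizes x s : path alternate x s ->
  let p := size (sizesA (x :: s)) in let n := size (sizesB (x :: s)) in
  if x.1 then n <= p <= n.+1 else p <= n <= p.+1.
Proof.
elim: s x => [|[[] m'] s IH] [[] m] //= /IH; rewrite /sizesA /sizesB /=; lia.
Qed.

Lemma size_sizes_alternate s : sorted alternate s ->
  size (sizesA s) <= (size (sizesB s)).+1 <= (size (sizesA s)).+2.
Proof. by case: s => //= -[[] m] s /alternate_sizes /=; lia. Qed.

Lemma valid_schedule_sizes a b s : valid_schedule a b s ->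
  [/\ sumn (sizesA s) = a, sumn (sizesB s) = b,
      all (leq 1) (sizesA s), all (leq 1) (sizesB s)
    & size (sizesA s) <= (size (sizesB s)).+1 <= (size (sizesA s)).+2].
Proof.
case/and4P; rewrite all_pos_sizes => /andP[posA posB] /size_sizes_alternate.
by move=> sizes /eqP sumA /eqP sumB.
Qed.

Lemma sizesA_tag c l : sizesA [seq (c, x) | x <- l] = if c then l else [::].
Proof. by case: c; elim: l => //= x l IH; rewrite /sizesA /= -/(sizesA _) IH. Qed.

Lemma sizesB_tag c l : sizesB [seq (c, x) | x <- l] = if c then [::] else l.
Proof. by case: c; elim: l => //= x l IH; rewrite /sizesB /= -/(sizesB _) IH. Qed.

Fixpoint interleave (b : bool) (l1 l2 : seq nat) : seq batch :=
  match l1, l2 with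
  | x :: l1', y :: l2' => (b, x) :: (~~ b, y) :: interleave b l1' l2'
  | _, _ => [seq (b, x) | x <- l1] ++ [seq (~~ b, y) | y <- l2]
  end.

Lemma sizesA_interleave b l1 l2 :
  sizesA (interleave b l1 l2) = if b then l1 else l2.
Proof.
by case: b; elim: l1 l2 => [|x l1 IH] [|y l2];
  rewrite /sizesA /= -?/(sizesA _) ?IH ?cats0 ?sizesA_tag.
Qed.

Lemma sizesB_interleave b l1 l2 :
  sizesB (interleave b l1 l2) = if b then l2 else l1.
Proof.
by case: b; elim: l1 l2 => [|x l1 IH] [|y l2];
  rewrite /sizesB /= -?/(sizesB _) ?IH ?cats0 ?sizesB_tag.
Qed.

Lemma path_interleave b l1 l2 x0 : x0.1 = ~~ b ->
  size l2 <= size l1 <= (size l2).+1 -> path alternate x0 (interleave b l1 l2).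
Proof.
elim: l1 l2 x0 => [|x l1 IH] [|y l2] x0 /= x0E //.
- by case: l1 {IH} => // _; rewrite /alternate x0E /= andbT; case: b {x0E}.
- by move=> sz; rewrite /alternate x0E IH // andbT; case: b {x0E IH}.
Qed.

Definition schedule_of (lA lB : seq nat) : seq batch :=
  if size lB <= size lA then interleave true lA lB else interleave false lB lA.

Lemma sizesA_schedule_of lA lB : sizesA (schedule_of lA lB) = lA.
Proof. by rewrite /schedule_of; case: ifP; rewrite sizesA_interleave. Qed.

Lemma sizesB_schedule_of lA lB : sizesB (schedule_of lA lB) = lB.
Proof. by rewrite /schedule_of; case: ifP; rewrite sizesB_interleave. Qed.

Lemma valid_schedule_of lA lB :
  all (leq 1) lA -> all (leq 1) lB -> size lA <= (size lB).+1 <= (size lA).+2 ->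
  valid_schedule (sumn lA) (sumn lB) (schedule_of lA lB).
Proof.
move=> posA posB sz; apply/and4P; split.
- by rewrite all_pos_sizes sizesA_schedule_of sizesB_schedule_of posA.
- rewrite /schedule_of; case: ifP => le_BA.
    by apply: (@path_sorted _ _ (false, 0)); apply: path_interleave => //; lia.
  by apply: (@path_sorted _ _ (true, 0)); apply: path_interleave => //; lia.
- by rewrite -/(sizesA _) sizesA_schedule_of.
- by rewrite -/(sizesB _) sizesB_schedule_of.
Qed.

Definition balanced (m q : nat) : seq nat :=
  nseq (m %% q) (m %/ q).+1 ++ nseq (q - m %% q) (m %/ q).

Lemma size_balanced m q : 0 < q -> size (balanced m q) = q.
Proof. by move=> q_gt0; rewrite size_cat !size_nseq subnKC // ltnW ?ltn_pmod. Qed.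

Lemma sumn_balanced m q : 0 < q -> sumn (balanced m q) = m.
Proof.
move=> q_gt0; rewrite sumn_cat !sumn_nseq.
have := divn_eq m q; have := ltn_pmod m q_gt0.
move: (m %/ q) (m %% q) => d r lt_rq ->.
by rewrite mulSn mulnBr; have := leq_mul (leqnn d) (ltnW lt_rq); lia.
Qed.

Lemma balanced_pos m q : q <= m -> all (leq 1) (balanced m q).
Proof.
case: q => [|q] le_qm; first by rewrite /balanced all_cat !all_nseq orbT.
by rewrite /balanced all_cat !all_nseq ltnS !divn_gt0 // le_qm !orbT.
Qed.

Lemma balanced_entries m q :
  all (fun x => (x == m %/ q) || (x == (m %/ q).+1)) (balanced m q).
Proof. by rewrite /balanced all_cat !all_nseq !eqxx !orbT. Qed.

Lemma balanced_diag m : balanced m m = nseq m 1.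
Proof. by rewrite /balanced modnn subn0; case: m => // m; rewrite divnn. Qed.

Local Open Scope ring_scope.

Section SumSquares.
Variable R : realType.

Definition sum_sq (l : seq nat) : R := \sum_(x <- l) x%:R ^+ 2.

Lemma sqrn_ge_tangent (x j : nat) :
  (2 * j%:R + 1) * x%:R - j%:R * (j%:R + 1) <= x%:R ^+ 2 :> R.
Proof.
rewrite -subr_ge0.
have -> : x%:R ^+ 2 - ((2 * j%:R + 1) * x%:R - j%:R * (j%:R + 1)) =
          (x%:R - j%:R) * (x%:R - j.+1%:R) :> R by rewrite -natr1; ring.
have [le_xj|lt_jx] := leqP x j.
- by apply: mulr_le0; rewrite subr_le0 ler_nat // leqW.
- by apply: mulr_ge0; rewrite subr_ge0 ler_nat // ltnW.
Qed.

Lemma sum_sq_ge_tangent (l : seq nat) (j : nat) :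
  (2 * j%:R + 1) * (sumn l)%:R - (size l)%:R * (j%:R * (j%:R + 1)) <= sum_sq l.
Proof.
rewrite /sum_sq; elim: l => [|x l IH]; first by rewrite big_nil !mul0r mulr0 subr0.
by rewrite big_cons /= natrD -addn1 natrD; have := sqrn_ge_tangent x j; lra.
Qed.

Lemma sum_sq_tangent_eq (l : seq nat) (j : nat) :
  all (fun x => (x == j) || (x == j.+1)) l ->
  sum_sq l = (2 * j%:R + 1) * (sumn l)%:R - (size l)%:R * (j%:R * (j%:R + 1)).
Proof.
rewrite /sum_sq; elim: l => [|x l IH]; first by rewrite big_nil !mul0r mulr0 subr0.
rewrite big_cons /= => /andP[x_j /IH ->]; rewrite natrD -addn1 natrD.
by case/orP: x_j => /eqP ->; rewrite -?natr1; ring.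
Qed.

Lemma sumn_le_sum_sq (l : seq nat) : (sumn l)%:R <= sum_sq l.
Proof.
apply: le_trans _ (sum_sq_ge_tangent l 0).
by rewrite mulr0 add0r mul1r mul0r mulr0 subr0.
Qed.

Lemma sum_sq_ones n : sum_sq (nseq n 1) = n%:R.
Proof.
rewrite (sum_sq_tangent_eq (j := 0)) ?all_nseq ?orbT //.
by rewrite sumn_nseq size_nseq mul1n; ring.
Qed.

Lemma sum_sq_balanced_le (m q : nat) (l : seq nat) : (0 < q)%N ->
  (size l <= q)%N -> (m <= sumn l)%N -> sum_sq (balanced m q) <= sum_sq l.
Proof.
move=> q_gt0 le_lq le_m_suml.
rewrite (sum_sq_tangent_eq (balanced_entries m q)) sumn_balanced // size_balanced //.
apply: le_trans _ (sum_sq_ge_tangent l (m %/ q)); apply: lerB.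
- by rewrite ler_wpM2l ?ler_nat // addr_ge0 ?mulr_ge0.
- by rewrite ler_wpM2r ?ler_nat // mulr_ge0 ?addr_ge0.
Qed.

End SumSquares.

Lemma valid_schedule_exists a b : exists s, valid_schedule a b s.
Proof.
case: a => [|a]; case: b => [|b].
- by exists [::].
- by exists [:: (false, b.+1)]; rewrite /valid_schedule /= addn0 !eqxx.
- by exists [:: (true, a.+1)]; rewrite /valid_schedule /= addn0 !eqxx.
- exists [:: (true, a.+1); (false, b.+1)].
  by rewrite /valid_schedule /= !addn0 !eqxx.
Qed.

Section ScheduleTime.
Variables (R : realType) (kA kB tA tB : R).
Local Notation T := (sched_time kA kB tA tB).

Definition batches_time (t k : R) (l : seq nat) : R :=
  (size l)%:R * t + k * sum_sq R l.

Lemma sched_time_sizes s :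
  T s = batches_time tA kA (sizesA s) + batches_time tB kB (sizesB s).
Proof.
rewrite /batches_time /sum_sq /sched_time; elim: s => [|[[] x] s IH].
  by rewrite !big_nil !mul0r !mulr0 !addr0.
all: by rewrite !big_cons IH /batch_time /=; ring.
Qed.

Hypotheses (kA_ge0 : 0 <= kA) (kB_ge0 : 0 <= kB).
Hypotheses (tA_ge0 : 0 <= tA) (tB_ge0 : 0 <= tB).

Lemma sched_time_ge0 s : 0 <= T s.
Proof.
apply: sumr_ge0 => -[[] x] _ /=; rewrite /batch_time /=.
all: by rewrite addr_ge0 ?mulr_ge0 ?exprn_ge0 ?ler0n.
Qed.

Lemma schedule_fewer_B_jobs a b b' s :
  (0 < b')%N -> (b' <= b)%N -> valid_schedule a b s ->
  (size (sizesA s) <= b'.+1)%N ->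
  exists2 s', valid_schedule a b' s' & T s' <= T s.
Proof.
move=> b'_gt0 le_b'b /valid_schedule_sizes[sumA sumB posA posB sizes] le_pb'.
have n_gt0 : (0 < size (sizesB s))%N by case: (sizesB s) sumB => //= b0; lia.
set n := size (sizesB s); set q := minn n b'.
have q_gt0 : (0 < q)%N by rewrite leq_min n_gt0.
exists (schedule_of (sizesA s) (balanced b' q)).
  rewrite -sumA -{1}(sumn_balanced b' q_gt0).
  by apply: valid_schedule_of; rewrite ?balanced_pos ?geq_minr ?size_balanced //; lia.
rewrite [T s]sched_time_sizes sched_time_sizes sizesA_schedule_of sizesB_schedule_of.
rewrite lerD2l /batches_time size_balanced //; apply: lerD.
  by rewrite ler_wpM2r // ler_nat geq_minl.
rewrite ler_wpM2l //; have [le_nb'|lt_b'n] := leqP n b'.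
  by apply: sum_sq_balanced_le; rewrite ?sumB //; lia.
have -> : q = b' by apply/minn_idPr/ltnW.
rewrite balanced_diag sum_sq_ones; apply: le_trans _ (sumn_le_sum_sq R _).
by rewrite sumB ler_nat.
Qed.

(* Lower bound on the time of a schedule with p A-batches: the tangent bound at
   j for the A-batches, plus at least p - 1 B-batches taking at least tB + kB
   each.  [balanced_schedule] attains it. *)
Definition time_bound (a j : nat) (p : R) : R :=
  p * tA + kA * ((2 * j%:R + 1) * a%:R - p * (j%:R * (j%:R + 1)))
  + (p - 1) * (tB + kB).

Lemma time_bound_le_sched_time a b j s : valid_schedule a b s ->
  time_bound a j (size (sizesA s))%:R <= T s.
Proof.
case/valid_schedule_sizes=> sumA sumB _ posB /andP[le_pn _].
set p := size (sizesA s); set n := size (sizesB s).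
have le_p1_n : p%:R - 1 <= n%:R :> R by rewrite lerBlDr natr1 ler_nat.
have le_n_sq : n%:R <= sum_sq R (sizesB s).
  by apply: le_trans _ (sumn_le_sum_sq R _); rewrite ler_nat size_le_sumn.
rewrite sched_time_sizes /batches_time /time_bound -/p -/n lerD //.
  by rewrite lerD2l ler_wpM2l // /p -sumA sum_sq_ge_tangent.
apply: le_trans (_ : n%:R * (tB + kB) <= _).
  by rewrite ler_wpM2r ?addr_ge0.
by rewrite mulrDr lerD2l mulrC ler_wpM2l.
Qed.

Lemma time_bound_le_max a j x y z : x <= y <= z ->
  time_bound a j y <= Num.max (time_bound a j x) (time_bound a j z).
Proof.
have affine p : time_bound a j p =
    time_bound a j 0 + p * (time_bound a j 1 - time_bound a j 0).
  by rewrite /time_bound; ring.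
case/andP=> le_xy le_yz; rewrite (affine x) (affine y) (affine z) le_max !lerD2l.
have [v_ge0|v_lt0] := leP 0 (time_bound a j 1 - time_bound a j 0).
- by rewrite (ler_wpM2r v_ge0 le_yz) orbT.
- by rewrite (ler_wnM2r (ltW v_lt0) le_xy).
Qed.

Lemma balanced_schedule a b : (b < a)%N ->
  exists2 s, valid_schedule a b s & T s = time_bound a (a %/ b.+1) b.+1%:R.
Proof.
move=> lt_ba; exists (schedule_of (balanced a b.+1) (nseq b 1)).
  have ones_pos : all (leq 1) (nseq b 1) by rewrite all_nseq orbT.
  have := valid_schedule_of (balanced_pos lt_ba) ones_pos.
  rewrite sumn_balanced // sumn_nseq mul1n; apply.
  by rewrite size_balanced // size_nseq; lia.
rewrite sched_time_sizes sizesA_schedule_of sizesB_schedule_of /batches_time.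
rewrite (sum_sq_tangent_eq R (balanced_entries _ _)) sumn_balanced // size_balanced //.
by rewrite size_nseq sum_sq_ones /time_bound -natr1; ring.
Qed.

Lemma interpolate_schedule a b1 b2 b3 s1 s3 : (b1 < b2)%N -> (b2 < b3)%N ->
  valid_schedule a b1 s1 -> valid_schedule a b3 s3 ->
  exists2 s2, valid_schedule a b2 s2 & T s2 <= Num.max (T s1) (T s3).
Proof.
move=> lt12 lt23 v1 v3.
have [le_p3|lt_p3] := leqP (size (sizesA s3)) b2.+1.
  have b2_gt0 : (0 < b2)%N by apply: leq_ltn_trans lt12.
  have [s2 v2 le_s2] := schedule_fewer_B_jobs b2_gt0 (ltnW lt23) v3 le_p3.
  by exists s2; rewrite // le_max le_s2 orbT.
have le_p1 : (size (sizesA s1) <= b2)%N.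
  have [_ sumB _ posB /andP[le_pn _]] := valid_schedule_sizes v1.
  by have := size_le_sumn posB; lia.
have lt_b2a : (b2 < a)%N.
  have [sumA _ posA _ _] := valid_schedule_sizes v3.
  by have := size_le_sumn posA; lia.
have [s2 v2 T_s2] := balanced_schedule lt_b2a; exists s2; rewrite // T_s2.
apply: le_trans (time_bound_le_max _ _ (x := (size (sizesA s1))%:R)
                                       (z := (size (sizesA s3))%:R) _) _.
  by rewrite !ler_nat; lia.
by apply: le_max2; [exact: time_bound_le_sched_time v1 | exact: time_bound_le_sched_time v3].
Qed.

Lemma has_inf_sched_times a b :
  has_inf [set T s | s in [set s | valid_schedule a b s]].
Proof.
split; first by have [s vs] := valid_schedule_exists a b; exists (T s), s.
by exists 0 => _ [s _ <-]; apply: sched_time_ge0.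
Qed.

Lemma f_le_sched_time a b s : valid_schedule a b s -> f kA kB tA tB a b <= T s.
Proof. by move=> vs; apply: ge_inf (has_inf_sched_times a b).2 _ _; exists s. Qed.

Lemma sched_time_lt_f a b e : 0 < e ->
  exists2 s, valid_schedule a b s & T s < f kA kB tA tB a b + e.
Proof.
move=> e_gt0; have [_ [s vs <-]] := inf_adherent e_gt0 (has_inf_sched_times a b).
by exists s.
Qed.

End ScheduleTime.

Theorem theorem1 (R : realType) (kA kB tA tB L : R)
  (hkA : 0 <= kA) (hkB : 0 <= kB) (htA : 0 <= tA) (htB : 0 <= tB)
  (a b1 b2 b3 : nat) :
  (b1 < b2)%N -> (b2 < b3)%N ->
  f kA kB tA tB a b1 <= L -> f kA kB tA tB a b3 <= L ->
  f kA kB tA tB a b2 <= L.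
Proof.
move=> lt12 lt23 f1_le f3_le; rewrite leNgt; apply/negP => f2_gt.
have e_gt0 : 0 < f kA kB tA tB a b2 - L by rewrite subr_gt0.
have [s1 v1 lt1] := sched_time_lt_f hkA hkB htA htB a b1 e_gt0.
have [s3 v3 lt3] := sched_time_lt_f hkA hkB htA htB a b3 e_gt0.
have [s2 v2] := interpolate_schedule hkA hkB htA htB lt12 lt23 v1 v3.
have := f_le_sched_time hkA hkB htA htB v2.
by rewrite le_max => f2_le /orP[] ?; lra.
Qed.
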